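(* Fix integers $a,b\ge 2$ and $\varepsilon>0$. Let $n\to\infty$ and let $m=m(n)$ satisfy $m/n\to\infty$. Then all oriented hypergraphs $O\in\mathcal{O}(a,n,m)$, except for $o(|\mathcal{O}(a,n,m)|)$ of them, have the following property: for every coloring $C:[n]\to[b]$ and every $a$-tuple of colors $s=(s_1,\dots,s_a)\in[b]^a$, the number of hyperedges of $O$ whose color sequence with respect to $C$ is $s$ lies in the interval $\left[\left(\prod_{i=1}^a\frac{n_{s_i}^C}{n}-\varepsilon\right)m,\ \left(\prod_{i=1}^a\frac{n_{s_i}^C}{n}+\varepsilon\right)m\right]$.
   Context: An oriented $a$-uniform hypergraph on vertex set $[n]$ is a set of hyperedges, each an ordered sequence of $a$ distinct vertices, such that no two hyperedges consist of the same vertex set (i.e., an $a$-uniform hypergraph together with an independent total ordering of the vertices of each hyperedge). $\mathcal{O}(a,n,m)$ is the family of all oriented $a$-uniform hypergraphs on $[n]$ with exactly $m$ hyperedges. A coloring $C:[n]\to[b]$ is an arbitrary map; $n_j^C$ is the number of vertices of color $j$. The color sequence of a hyperedge $(v_1,\dots,v_a)$ is $(C(v_1),\dots,C(v_a))$. *)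

From HB Require Import structures.
From mathcomp Require Import all_boot all_order all_algebra.
From mathcomp Require Import reals.
Set Implicit Arguments. Unset Strict Implicit. Unset Printing Implicit Defensive.
Import Order.TTheory GRing.Theory Num.Theory.
Local Open Scope ring_scope.

(* A candidate hyperedge on vertex set 'I_n (= [n]) is an ordered a-tuple of
   vertices; it is a genuine hyperedge when its entries are distinct. *)
Definition vset (a n : nat) (e : a.-tuple 'I_n) : {set 'I_n} := [set x in e].

Definition oriented (a n : nat) (H : {set a.-tuple 'I_n}) : bool :=
  [forall e in H, uniq e] &&
  [forall e in H, forall f in H, (vset e == vset f) ==> (e == f)].

Definition Ofam (a n m : nat) : {set {set a.-tuple 'I_n}} :=
  [set H : {set a.-tuple 'I_n} | oriented H && (#|H| == m)].

Definition ncol (n b : nat) (C : {ffun 'I_n -> 'I_b}) (j : 'I_b) : nat :=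
  #|[set v | C v == j]|.

Definition ncolseq (a n b : nat) (H : {set a.-tuple 'I_n})
  (C : {ffun 'I_n -> 'I_b}) (s : a.-tuple 'I_b) : nat :=
  #|[set e in H | map_tuple C e == s]|.

Definition good (R : realType) (a n b m : nat) (eps : R)
  (H : {set a.-tuple 'I_n}) : bool :=
  [forall C : {ffun 'I_n -> 'I_b}, forall s : a.-tuple 'I_b,
    let p := \prod_(i < a) ((ncol C (tnth s i))%:R / n%:R) in
    ((p - eps) * m%:R <= (ncolseq H C s)%:R) &&
    ((ncolseq H C s)%:R <= (p + eps) * m%:R)].

Definition bad (R : realType) (a n b m : nat) (eps : R)
  : {set {set a.-tuple 'I_n}} :=
  [set H in Ofam a n m | ~~ good b m eps H].

(* An oriented hypergraph with m hyperedges is a set of m tuples with distinct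
   entries, at most one from each class of tuples sharing a vertex set, and all
   classes have the same size a!.  Fix a colouring C and a colour sequence s, let
   X count the hyperedges of colour sequence s and q be the fraction of
   distinct-entry tuples of colour sequence s; q differs from the product p of
   the colour densities by at most a^2/n.  Summing x^X over all hypergraphs is
   an elementary symmetric polynomial of the class weights, so Maclaurin's
   inequality bounds the average of x^X by (1 + (x - 1) q)^m <= exp ((x - 1) q m),
   the moment generating function of a binomial variable.  Chernoff's bound
   then leaves a fraction at most 2 exp (- e^2 m / 48), e = min eps 1, of
   hypergraphs in which X is not within eps m of p m, and the union bound over
   the b^n colourings and b^a colour sequences costs a factor b^(n + a), which
   is beaten by exp (- e^2 m / 48) as soon as m / n is large. *)

From HB Require Import structures.
From mathcomp Require Import all_boot all_order all_algebra.
From mathcomp Require Import reals sequences exp.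
From mathcomp Require Import ring lra.
Set Implicit Arguments. Unset Strict Implicit. Unset Printing Implicit Defensive.
Import Order.TTheory GRing.Theory Num.Theory.
Local Open Scope ring_scope.

Lemma bernoulli_exprD (R : realFieldType) (x h : R) k : 0 <= x -> 0 <= x + h ->
  x ^+ k.+1 + k.+1%:R * x ^+ k * h <= (x + h) ^+ k.+1.
Proof.
move=> x0 xh0; elim: k => [|k IH]; first by rewrite expr1 expr0 mulr1 mul1r.
rewrite [(x + h) ^+ k.+2]exprS; apply: le_trans (ler_wpM2l xh0 IH).
have -> : (x + h) * (x ^+ k.+1 + k.+1%:R * x ^+ k * h) =
    x ^+ k.+2 + k.+2%:R * x ^+ k.+1 * h + k.+1%:R * x ^+ k * h ^+ 2.
  by rewrite !exprS -[k.+2]addn1 -[k.+1]addn1 !natrD; ring.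
by rewrite lerDl mulr_ge0 ?sqr_ge0 ?mulr_ge0 ?exprn_ge0.
Qed.

(* Inductive step of Maclaurin's inequality e_m <= C(N, m) mean^m, via
   e_(m+1)(old, w) = w e_m(old) + e_(m+1)(old); here mu is the mean of the N old
   weights and w the new one. *)
Lemma maclaurin_step (R : realFieldType) (N m : nat) (w mu F1 F2 : R) :
  0 <= w -> 0 <= mu ->
  F1 <= 'C(N, m)%:R * mu ^+ m -> F2 <= 'C(N, m.+1)%:R * mu ^+ m.+1 ->
  w * F1 + F2 <= 'C(N.+1, m.+1)%:R * ((w + N%:R * mu) / N.+1%:R) ^+ m.+1.
Proof.
move=> w0 mu0 le1 le2.
rewrite expr_div_n mulrA ler_pdivlMr ?exprn_gt0 ?ltr0Sn //.
have binS_diag : N.+1%:R * 'C(N, m)%:R = m.+1%:R * 'C(N.+1, m.+1)%:R :> R.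
  by rewrite -!natrM mul_bin_diag.
have binS_down : N.+1%:R * 'C(N, m.+1)%:R = (N%:R - m%:R) * 'C(N.+1, m.+1)%:R :> R.
  rewrite -natrM mul_bin_down natrM subSS; case: (leqP m N) => [mN|Nm]; first by rewrite natrB.
  by rewrite bin_small ?ltnS // !mulr0.
set x := N.+1%:R * mu; have x0 : 0 <= x by rewrite mulr_ge0.
have shift : w + N%:R * mu = x + (w - mu) by rewrite /x -addn1 natrD; ring.
have tangent : x ^+ m.+1 + m.+1%:R * x ^+ m * (w - mu) <= (w + N%:R * mu) ^+ m.+1.
  by rewrite shift bernoulli_exprD // -shift addr_ge0 ?mulr_ge0.
apply: le_trans (ler_wpM2l (ler0n _ _) tangent).
apply: le_trans (_ : (w * ('C(N, m)%:R * mu ^+ m) + 'C(N, m.+1)%:R * mu ^+ m.+1)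
    * N.+1%:R ^+ m.+1 <= _); first by rewrite ler_wpM2r ?exprn_ge0 ?lerD ?ler_wpM2l.
rewrite le_eqVlt; apply/orP; left; apply/eqP.
transitivity (N.+1%:R ^+ m * mu ^+ m *
    (w * (N.+1%:R * 'C(N, m)%:R) + mu * (N.+1%:R * 'C(N, m.+1)%:R))).
  by rewrite !exprS; ring.
rewrite binS_diag binS_down /x exprS !exprMn -[N.+1]addn1 -[m.+1]addn1 !natrD; ring.
Qed.

Lemma set_ind (T : finType) (P : {set T} -> Prop) :
  P set0 -> (forall (x : T) (A : {set T}), x \notin A -> P A -> P (x |: A)) -> forall A, P A.
Proof.
move=> P0 PU1 A; have [n leAn] := ubnP #|A|; elim: n A leAn => // n IHn A.
case: (set_0Vmem A) => [-> _|[x Ax]]; first exact: P0.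
rewrite -(setD1K Ax) cardsU1 setD11 add1n ltnS => /IHn; by apply: PU1; rewrite setD11.
Qed.

Section Transversals.
Variables (R : realFieldType) (T K : finType) (cls : T -> K) (U : {set T}).

Definition transversal (A : {set K}) (H : {set T}) : bool :=
  (H \subset U :&: cls @^-1: A) && dinjectiveb cls H.

Definition transversals (A : {set K}) (m : nat) : {set {set T}} :=
  [set H | transversal A H & #|H| == m].

(* A transversal meets each class at most once, so [transversal_sum g A m] is the
   m-th elementary symmetric polynomial of the class sums over A. *)
Definition transversal_sum (g : T -> R) (A : {set K}) (m : nat) : R :=
  \sum_(H in transversals A m) \prod_(e in H) g e.

Definition class_sum (g : T -> R) (k : K) : R := \sum_(e in U | cls e == k) g e.

Lemma transversals0 A : transversals A 0 = [set set0].
Proof.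
apply/setP => H; rewrite !inE cards_eq0 andbC; case: eqP => // ->.
by rewrite /transversal sub0set; apply/dinjectiveP => x; rewrite inE.
Qed.

Lemma transversal_sum0 g A : transversal_sum g A 0 = 1.
Proof. by rewrite /transversal_sum transversals0 big_set1 big_set0. Qed.

Lemma transversal_sum_set0 g m : transversal_sum g set0 m.+1 = 0.
Proof.
rewrite /transversal_sum big_pred0 // => H; rewrite !inE /transversal preimset0 setI0.
by rewrite subset0 andbAC; case: eqP => // ->; rewrite cards0.
Qed.

Section Extension.
Variables (A : {set K}) (k : K).
Hypothesis kA : k \notin A.

Lemma transversals_setU1_classless H m :
  (H \in transversals (k |: A) m) && [forall e in H, cls e != k] =
  (H \in transversals A m).
Proof.
have classless : (H \subset U :&: cls @^-1: (k |: A)) && [forall e in H, cls e != k] =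
    (H \subset U :&: cls @^-1: A).
  apply/andP/subsetP => [[/subsetP sHkA /forall_inP Hk] e He | sHA].
    have := sHkA e He; rewrite !inE => /andP[-> /orP[/eqP ek|//]].
    by move: (Hk e He); rewrite ek eqxx.
  split; last first.
    apply/forall_inP => e /sHA; rewrite !inE => /andP[_].
    by apply: contraTneq => ->.
  by apply/subsetP => e /sHA; rewrite !inE => /andP[-> ->]; rewrite orbT.
by rewrite !inE /transversal -classless; case: [forall _ in _, _]; rewrite ?andbT ?andbF.
Qed.

Lemma transversals_setU1 e H m : e \in U -> cls e = k ->
  (e |: H \in transversals (k |: A) m.+1) && (e \notin H) = (H \in transversals A m).
Proof.
move=> eU ek; have [eH|eH] := boolP (e \in H).
  rewrite andbF; apply/esym/negbTE; rewrite !inE negb_and; apply/orP; left.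
  apply/negP => /andP[/subsetP/(_ e eH)]; rewrite !inE ek (negbTE kA).
  by rewrite andbF.
rewrite andbT !inE cardsU1 eH add1n eqSS; congr (_ && _).
rewrite /transversal subUset sub1set !inE eU ek eqxx /=.
apply/andP/andP => [[sHkA /dinjectiveP inj]|[sHA /dinjectiveP inj]]; split.
- apply/subsetP => f Hf; move/subsetP: sHkA => /(_ f Hf); rewrite !inE.
  case/andP => -> /orP[/eqP fk|//]; case/negP: eH.
  by rewrite -(inj f e) ?setU11 ?setU1r // ek.
- by apply/dinjectiveP => f1 f2 H1 H2; apply: inj; rewrite setU1r.
- apply: subset_trans sHA _; apply/subsetP => f; rewrite !inE.
  by case/andP => -> ->; rewrite orbT.
- have clsH f : f \in H -> cls f != k.
    move=> Hf; move/subsetP: sHA => /(_ f Hf); rewrite !inE => /andP[_].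
    by apply: contraTneq => ->.
  apply/dinjectiveP => f1 f2; rewrite !inE.
  case/predU1P => [->|H1]; case/predU1P => [->|H2] //.
  + by rewrite ek => /esym/eqP; rewrite (negbTE (clsH _ H2)).
  + by rewrite ek => /eqP; rewrite (negbTE (clsH _ H1)).
  + exact: inj.
Qed.

Lemma transversal_sumU1 g m :
  transversal_sum g (k |: A) m.+1 =
  class_sum g k * transversal_sum g A m + transversal_sum g A m.+1.
Proof.
rewrite /transversal_sum (bigID (fun H : {set T} => [exists e in H, cls e == k])) /=.
congr (_ + _); last first.
  by apply: eq_bigl => H; rewrite negb_exists_in transversals_setU1_classless.
rewrite /class_sum big_distrl /=.
transitivity (\sum_(H in transversals (k |: A) m.+1 | [exists e in H, cls e == k])
    \sum_(e in U | cls e == k) (if e \in H then \prod_(f in H) g f else 0)).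
  apply: eq_bigr => H /andP[HkA /exists_inP[e He /eqP ek]].
  rewrite -big_mkcondr [RHS](big_pred1 e) // => f.
  move: HkA; rewrite !inE => /andP[/andP[/subsetP sH /dinjectiveP inj] _].
  apply/andP/eqP => [[/andP[_ /eqP fk] Hf]|->]; first by apply: inj; rewrite // fk ek.
  by have := sH e He; rewrite !inE ek eqxx => /andP[-> _].
rewrite exchange_big /=; apply: eq_bigr => e /andP[eU /eqP ek].
rewrite -big_mkcondr big_distrr /=.
rewrite (reindex_onto (fun H => e |: H) (fun H => H :\ e)); last first.
  by move=> H /andP[_ He]; rewrite setD1K.
apply: eq_big => [H|H /andP[_ /eqP eH]].
  rewrite setU11 andbT -(transversals_setU1 _ _ eU ek) -andbA; congr (_ && _).
  have -> : [exists f in e |: H, cls f == k] by apply/exists_inP; exists e; rewrite ?setU11 ?ek.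
  by apply/eqP/idP => [<-|/setU1K //]; rewrite setD11.
have eH' : e \notin H by rewrite -eH setD11.
by rewrite big_setU1.
Qed.

End Extension.

Lemma transversal_sum_maclaurin g : (forall e, 0 <= g e) -> forall A m,
  transversal_sum g A m <= 'C(#|A|, m)%:R * ((\sum_(k in A) class_sum g k) / #|A|%:R) ^+ m.
Proof.
move=> g0; have w0 k : 0 <= class_sum g k by rewrite sumr_ge0.
elim/set_ind => [|k A kA IH] [|m]; rewrite ?transversal_sum0 ?bin0 ?mul1r //.
  by rewrite transversal_sum_set0 cards0 bin0n mul0r.
set W := \sum_(j in A) class_sum g j.
have eW : W = #|A|%:R * (W / #|A|%:R).
  have [/cards0_eq A0|A0] := posnP #|A|; last by rewrite mulrC divfK ?pnatr_eq0 -?lt0n.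
  by rewrite /W A0 big_set0 mul0r mulr0.
rewrite transversal_sumU1 // big_setU1 //= cardsU1 kA add1n -/W [in X in _ <= X]eW.
by apply: maclaurin_step; rewrite ?divr_ge0 ?sumr_ge0.
Qed.

Lemma transversal_sum_const g c (A : {set K}) m : (forall k, k \in A -> class_sum g k = c) ->
  transversal_sum g A m = 'C(#|A|, m)%:R * c ^+ m.
Proof.
elim/set_ind: A m => [|k A kA IH] [|m] cA; rewrite ?transversal_sum0 ?bin0 ?mul1r //.
  by rewrite transversal_sum_set0 cards0 bin0n mul0r.
have cA' j : j \in A -> class_sum g j = c by move=> jA; rewrite cA // setU1r.
rewrite transversal_sumU1 // cA ?setU11 // !IH // cardsU1 kA add1n binS natrD exprS; ring.
Qed.

Lemma card_transversals (A : {set K}) m :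
  #|transversals A m|%:R = transversal_sum (fun=> 1) A m.
Proof. by rewrite /transversal_sum (eq_bigr (fun=> 1)) ?sumr_const // => H _; rewrite big1. Qed.

Lemma transversal_sum_le_mean g c (A : {set K}) m :
  (forall e, 0 <= g e) -> c != 0 -> (forall k, k \in A -> class_sum (fun=> 1) k = c) ->
  (forall e, e \in U -> cls e \in A) ->
  transversal_sum g A m <= #|transversals A m|%:R * ((\sum_(e in U) g e) / #|U|%:R) ^+ m.
Proof.
move=> g0 c0 cA UA.
have sum_classes f : \sum_(e in U) f e = \sum_(k in A) class_sum f k.
  exact: partition_big.
have -> : #|U|%:R = #|A|%:R * c.
  rewrite -sum1_card natr_sum (sum_classes (fun=> 1)) (eq_bigr (fun=> c) cA).
  by rewrite sumr_const mulr_natl.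
rewrite card_transversals (transversal_sum_const m cA) -mulrA -exprMn sum_classes.
apply: le_trans (transversal_sum_maclaurin g0 A m) _.
by rewrite invfM mulrCA [c * _]mulrCA mulfV // mulr1.
Qed.

End Transversals.

Section ExpBounds.
Variable R : realType.

Lemma expR_le_quad (x : R) : 0 <= x <= 1 / 2 -> expR x <= 1 + x + 2 * x ^+ 2.
Proof.
case/andP => x0 x1; have := expRxMexpNx_1 x; have := expR_ge1Dx (- x).
have := expR_gt0 x; set E := expR x; set F := expR (- x) => E0 F1 EF.
have x1' : 0 < 1 - x by lra.
rewrite -(ler_pM2r x1'); apply: le_trans (_ : 1 <= _).
  by rewrite -[X in _ <= X]EF ler_pM2l.
have : 0 <= x ^+ 2 * (1 - 2 * x) by rewrite mulr_ge0 ?sqr_ge0 //; lra.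
rewrite expr2; nra.
Qed.

Lemma expRN_le_quad (x : R) : 0 <= x -> expR (- x) <= 1 - x + x ^+ 2.
Proof.
move=> x0; have := expRxMexpNx_1 x; have := expR_ge1Dx x.
have := expR_gt0 (- x); set E := expR x; set F := expR (- x) => F0 E1 EF.
have x1 : 0 < 1 + x by lra.
rewrite -(ler_pM2r x1); apply: le_trans (_ : 1 <= _).
  by rewrite -[X in _ <= X]EF [E * F]mulrC ler_pM2l.
have : 0 <= x ^+ 3 by rewrite exprn_ge0.
rewrite !exprS expr0; nra.
Qed.

End ExpBounds.

Section Chernoff.
Variables (R : realType) (I : finType) (F : {set I}) (X : I -> nat) (m : nat) (q : R).
Hypothesis mgf_le : forall x : R, 0 < x ->
  \sum_(i in F) x ^+ X i <= #|F|%:R * expR ((x - 1) * q * m%:R).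

Lemma exp_markov (y t : R) (P : pred I) :
  (forall i, i \in F -> P i -> t <= y * (X i)%:R) ->
  #|[set i in F | P i]|%:R <= #|F|%:R * expR ((expR y - 1) * q * m%:R - t).
Proof.
move=> tP.
have markov : #|[set i in F | P i]|%:R * expR t <= \sum_(i in F) expR y ^+ X i.
  rewrite mulr_natl -sumr_const (eq_bigl (fun i => (i \in F) && P i)); last first.
    by move=> i; rewrite inE.
  rewrite big_mkcondr /=; apply: ler_sum => i iF; case: ifP => Pi.
    by rewrite -expRM_natr ler_expR tP.
  by rewrite exprn_ge0 ?expR_ge0.
rewrite expRB mulrA ler_pdivlMr ?expR_gt0 //.
apply: (le_trans markov); exact: mgf_le (expR_gt0 y).
Qed.

(* Both tails use the tilt l = e / 12; as e^l - 1 <= l + 2 l^2, the exponent is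
   then at most - e^2 / 48 per unit of m. *)
Lemma chernoff_upper (p e : R) : 0 < e <= 1 -> 0 <= p <= 1 -> q <= p + e / 2 ->
  #|[set i in F | (p + e) * m%:R < (X i)%:R]|%:R <= #|F|%:R * expR (- (e ^+ 2 / 48) * m%:R).
Proof.
case/andP => e0 e1 /andP[p0 p1] qp; set l := e / 12.
have l0 : 0 <= l by rewrite /l; lra.
apply: le_trans (@exp_markov l (l * ((p + e) * m%:R)) _ _) _.
  by move=> i _ /ltW; apply: ler_wpM2l.
rewrite ler_wpM2l ?ler0n // ler_expR.
rewrite (_ : _ - _ = ((expR l - 1) * q - l * (p + e)) * m%:R); last by ring.
rewrite ler_wpM2r ?ler0n //.
have E1l : 0 <= expR l - 1 by have := expR_ge1Dx l; lra.
have l_small : 0 <= l <= 1 / 2 by rewrite l0 /l; lra.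
have E1u : expR l - 1 <= l + 2 * l ^+ 2 by have := expR_le_quad l_small; lra.
have : (expR l - 1) * q <= (l + 2 * l ^+ 2) * (p + e / 2).
  by apply: le_trans (ler_wpM2l E1l qp) (ler_wpM2r _ E1u); lra.
rewrite /l !expr2; nra.
Qed.

Lemma chernoff_lower (p e : R) : 0 < e <= 1 -> p <= 1 -> p - e / 2 <= q ->
  #|[set i in F | (X i)%:R < (p - e) * m%:R]|%:R <= #|F|%:R * expR (- (e ^+ 2 / 48) * m%:R).
Proof.
case/andP => e0 e1 p1 pq; set l := e / 12.
have l0 : 0 <= l by rewrite /l; lra.
apply: le_trans (@exp_markov (- l) (- l * ((p - e) * m%:R)) _ _) _.
  by move=> i _ /ltW Xi; rewrite !mulNr lerN2 ler_wpM2l.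
rewrite ler_wpM2l ?ler0n // ler_expR.
rewrite (_ : _ - _ = ((expR (- l) - 1) * q + l * (p - e)) * m%:R); last by ring.
rewrite ler_wpM2r ?ler0n //.
have E2l : - l <= expR (- l) - 1 by have := expR_ge1Dx (- l); lra.
have E2u : expR (- l) - 1 <= - l + l ^+ 2 by have := expRN_le_quad l0; lra.
have E2n : expR (- l) - 1 <= 0 by rewrite subr_le0 expR_le1 oppr_le0.
have E2q : (expR (- l) - 1) * q <= (expR (- l) - 1) * (p - e / 2) by exact: ler_wnM2l.
have [pe|pe] := lerP 0 (p - e / 2).
  have := ler_wpM2r pe E2u; have : 0 <= e ^+ 2 * (1 - p + e / 2).
    by rewrite mulr_ge0 ?sqr_ge0 //; lra.
  rewrite /l !expr2 in E2q *; nra.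
have := ler_wnM2r (ltW pe) E2l; have := sqr_ge0 e; rewrite /l !expr2 in E2q *; nra.
Qed.

Lemma chernoff (p e eps : R) : 0 < e <= 1 -> e <= eps -> 0 <= p <= 1 -> `|q - p| <= e / 2 ->
  #|[set i in F | ~~ (((p - eps) * m%:R <= (X i)%:R) && ((X i)%:R <= (p + eps) * m%:R))]|%:R
  <= 2 * #|F|%:R * expR (- (e ^+ 2 / 48) * m%:R).
Proof.
move=> e01 ee p01; rewrite ler_distlC => /andP[pq qp].
have m0 : 0 <= m%:R :> R := ler0n _ _.
apply: le_trans (_ : (#|[set i in F | (p + e) * m%:R < (X i)%:R]| +
    #|[set i in F | (X i)%:R < (p - e) * m%:R]|)%:R <= _).
  rewrite ler_nat; apply: leq_trans (leq_card_setU _ _).1; apply: subset_leq_card.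
  apply/subsetP => i; rewrite !inE negb_and -!ltNge => /andP[iF /orP[lt|lt]]; rewrite iF /=.
    by apply/orP; right; apply: lt_le_trans lt _; rewrite ler_wpM2r //; lra.
  by apply/orP; left; apply: le_lt_trans lt; rewrite ler_wpM2r //; lra.
rewrite natrD -mulrA mulr_natl mulr2n.
by case/andP: p01 => p0 p1; rewrite lerD ?chernoff_upper ?chernoff_lower ?p0 //; lra.
Qed.

End Chernoff.

Lemma dist_frac_setI (R : realFieldType) (T : finType) (G U : {set T}) : (0 < #|U|)%N ->
  `|#|G :&: U|%:R / #|U|%:R - #|G|%:R / #|T|%:R| <= #|~: U|%:R / #|T|%:R :> R.
Proof.
move=> U0; have T0 : (0 < #|T|)%N := leq_trans U0 (max_card _).
have kU : (#|G :&: U| <= #|U|)%N by rewrite subset_leq_card ?subsetIr.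
have kG : (#|G :&: U| <= #|G|)%N by rewrite subset_leq_card ?subsetIl.
have Gk : (#|G| <= #|G :&: U| + #|~: U|)%N.
  by rewrite -[X in (X <= _)%N](cardsID U G) leq_add2l subset_leq_card // setDE subsetIr.
have cardT : #|T| = (#|U| + #|~: U|)%N by rewrite cardsC.
move: kU kG Gk; rewrite cardT in T0 *; rewrite -!(ler_nat R) natrD.
move: U0 T0; rewrite -!(ltr_nat R) !natrD.
set k := #|G :&: U|%:R; set g := #|G|%:R; set u := #|U|%:R; set c := #|~: U|%:R.
move=> u0 N0 ku kg gk.
have -> : k / u - g / (u + c) = (k - g) / (u + c) + k / u * (c / (u + c)).
  by field; rewrite !gt_eqF.
have c0 : 0 <= c by rewrite ler0n.
have t1l : - (c / (u + c)) <= (k - g) / (u + c).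
  by rewrite -mulNr ler_pM2r ?invr_gt0 //; lra.
have t1u : (k - g) / (u + c) <= 0.
  by apply: mulr_le0_ge0; [lra | rewrite invr_ge0; lra].
have d0 : 0 <= c / (u + c) by rewrite divr_ge0 //; lra.
have ku1 : k / u <= 1 by rewrite ler_pdivrMr // mul1r.
have t2l : 0 <= k / u * (c / (u + c)) by rewrite mulr_ge0 // divr_ge0 ?ler0n // ltW.
have t2u := ler_piMl d0 ku1.
rewrite ler_norml; apply/andP; split; lra.
Qed.

Lemma card_exists_le (T J : finType) (A : {set T}) (P : J -> pred T) :
  (#|[set x in A | [exists j, P j x]]| <= \sum_j #|[set x in A | P j x]|)%N.
Proof.
have cardE (Q : pred T) : #|[set x in A | Q x]| = (\sum_(x in A) (Q x : nat))%N.
  by rewrite -sum1dep_card big_mkcondr; apply: eq_bigr => x _; case: (Q x).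
under eq_bigr => j _ do rewrite (cardE (P j)).
rewrite (cardE (fun x => [exists j, P j x])).
rewrite exchange_big; apply: leq_sum => x _; case: existsP => // [[j Pj]].
by rewrite (bigD1 j) //= Pj.
Qed.

Lemma expn_subn_le_ffact n a : ((n - a) ^ a <= n ^_ a)%N.
Proof.
rewrite ffact_prod -[in X in (_ ^ X)%N](card_ord a) -prod_nat_const.
by apply: leq_prod => i _; rewrite leq_sub2l // ltnW.
Qed.

Lemma ffact_lbound (R : realFieldType) (n a : nat) : (a <= n)%N ->
  n%:R ^+ a - (a * a)%:R * n%:R ^+ a.-1 <= (n ^_ a)%:R :> R.
Proof.
case: a => [|k] kn; first by rewrite mul0n mul0r subr0 ffactn0 expr0.
apply: le_trans (_ : (n - k.+1)%N%:R ^+ k.+1 <= _); last first.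
  by rewrite -natrX ler_nat expn_subn_le_ffact.
rewrite natrB //; apply: le_trans (bernoulli_exprD k (ler0n R n) _); last first.
  by rewrite subr_ge0 ler_nat.
by rewrite natrM /=; lra.
Qed.

Lemma card_colour_tuples (n b k : nat) (C : {ffun 'I_n -> 'I_b}) (s : k.-tuple 'I_b) :
  #|[set t : k.-tuple 'I_n | map_tuple C t == s]| = (\prod_(i < k) ncol C (tnth s i))%N.
Proof.
elim: k s => [|k IH] s.
  rewrite big_ord0 -(cards1 ([tuple] : 0.-tuple 'I_n)); apply: eq_card => t.
  by rewrite !inE (tuple0 t) (tuple0 s) (tuple0 (map_tuple _ _)) !eqxx.
case/tupleP: s => j s; rewrite big_ord_recl tnth0.
under eq_bigr do rewrite tnthS.
pose cons_pair (p : 'I_n * k.-tuple 'I_n) := [tuple of p.1 :: p.2].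
rewrite -IH /ncol -cardsX -(card_imset _ (f := cons_pair)); last first.
  by move=> [x t] [y u] /(congr1 val) [-> /val_inj ->].
apply: eq_card => t; case/tupleP: t => x t; rewrite inE.
apply/eqP/imsetP => [[Cx Ct]|[[y u]]].
  by exists (x, t); rewrite // !inE Cx eqxx -val_eqE /= Ct.
rewrite !inE => /andP[/eqP Cy /eqP Cu] /(congr1 val) [-> /val_inj ->].
by apply/val_inj; rewrite /= Cy -Cu.
Qed.

Section Hypergraphs.
Variables (n a : nat).

Definition distinct_tuples : {set a.-tuple 'I_n} := [set t : a.-tuple 'I_n | uniq t].

Definition a_subsets : {set {set 'I_n}} := [set X : {set 'I_n} | #|X| == a].

Lemma card_vset (t : a.-tuple 'I_n) : uniq t -> #|vset t| = a.
Proof. by move=> ut; rewrite /vset cardsE (card_uniqP ut) size_tuple. Qed.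

Lemma vset_a_subsets (t : a.-tuple 'I_n) : t \in distinct_tuples -> vset t \in a_subsets.
Proof. by rewrite !inE => ut; rewrite card_vset. Qed.

Lemma Ofam_transversals m : Ofam a n m = transversals (@vset a n) distinct_tuples a_subsets m.
Proof.
apply/setP => H; rewrite !inE /oriented /transversal; congr (_ && _).
congr (_ && _).
  apply/forall_inP/subsetP => [Hu t Ht|HU t Ht].
    by rewrite !inE Hu // card_vset ?Hu ?eqxx.
  by move: (HU t Ht); rewrite !inE => /andP[].
apply/'forall_in_forall_inP/dinjectiveP => [inj t u Ht Hu tu|inj t Ht u Hu].
  by apply/eqP; move: (inj t Ht u Hu); rewrite tu eqxx.
by apply/implyP => /eqP tu; rewrite (inj t u).
Qed.

Lemma class_sum_distinct_tuples (R : realFieldType) (X : {set 'I_n}) : X \in a_subsets ->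
  class_sum (@vset a n) distinct_tuples (fun=> 1) X = (a ^_ a)%:R :> R.
Proof.
rewrite inE => /eqP cardX; have := card_uniq_tuples a (mem X); rewrite cardX => <-.
rewrite /class_sum sumr_const; congr (_%:R); apply: eq_card => t.
rewrite unfold_in /distinct_tuples !inE andbC; apply: andb_id2r => ut.
rewrite eqEcard card_vset // cardX leqnn andbT.
by apply/subsetP/allP => tX x xt; apply: tX; rewrite /vset inE in xt *.
Qed.

Lemma card_distinct_tuples : #|distinct_tuples| = (n ^_ a)%N.
Proof.
rewrite -[n in RHS](card_ord n) -card_uniq_tuples; apply: eq_card => t.
by rewrite !inE; apply/esym/andb_idl => _; apply/allP.
Qed.

Lemma card_nonuniq_tuples (R : realFieldType) :
  #|~: distinct_tuples|%:R * n%:R <= (a * a)%:R * (n ^ a)%:R :> R.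
Proof.
have cardT : #|{: a.-tuple 'I_n}| = (n ^ a)%N by rewrite card_tuple card_ord.
have cardU := card_distinct_tuples.
have cardC : #|~: distinct_tuples| = (n ^ a - n ^_ a)%N.
  by rewrite cardsCs setCK cardT cardU.
rewrite cardC; have [an|na] := leqP a n; last first.
  rewrite ffact_small // subn0 -!natrM ler_nat mulnC leq_mul //.
  by rewrite (leq_trans (ltnW na)) // leq_pmulr // (leq_trans _ na).
have ffact_le : (n ^_ a <= n ^ a)%N by rewrite -cardT -cardU max_card.
have [a0|a0] := posnP a; first by rewrite a0 expn0 ffactn0 subnn mul0r mulr_ge0 ?ler0n.
have nE : n%:R ^+ a = n%:R * n%:R ^+ a.-1 :> R by rewrite -exprS prednK.
have := ffact_lbound R an; rewrite natrB // natrX nE natrM.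
set F := (n ^_ a)%:R; set X := n%:R ^+ a.-1 => ffactE.
have : 0 <= (F - (n%:R * X - a%:R * a%:R * X)) * n%:R by rewrite mulr_ge0 ?ler0n //; lra.
nra.
Qed.

End Hypergraphs.

Section Colourings.
Variables (R : realType) (n a b : nat) (C : {ffun 'I_n -> 'I_b}) (s : a.-tuple 'I_b).

Definition colour_tuples : {set a.-tuple 'I_n} := [set t : a.-tuple 'I_n | map_tuple C t == s].

Definition colseq_density : R := \prod_(i < a) ((ncol C (tnth s i))%:R / n%:R).

Definition colseq_balanced (eps : R) (m : nat) (H : {set a.-tuple 'I_n}) : bool :=
  ((colseq_density - eps) * m%:R <= (ncolseq H C s)%:R) &&
  ((ncolseq H C s)%:R <= (colseq_density + eps) * m%:R).

Definition distinct_colour_fraction : R :=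
  #|colour_tuples :&: distinct_tuples n a|%:R / #|distinct_tuples n a|%:R.

Lemma colseq_densityE : colseq_density = #|colour_tuples|%:R / #|{: a.-tuple 'I_n}|%:R.
Proof.
rewrite /colseq_density prodf_div card_colour_tuples natr_prod prodr_const.
by rewrite card_tuple !card_ord natrX.
Qed.

Lemma colseq_density_ge0_le1 : (0 < n)%N -> 0 <= colseq_density <= 1.
Proof.
move=> n0; have unit_factor i : 0 <= ((ncol C (tnth s i))%:R / n%:R : R) <= 1.
  rewrite divr_ge0 ?ler0n //= ler_pdivrMr ?ltr0n // mul1r ler_nat.
  by rewrite -[X in (_ <= X)%N]card_ord max_card.
by rewrite prodr_ge0 ?prodr_ile1 // => i _; case/andP: (unit_factor i).
Qed.

Lemma colseq_mgf (x : R) m : 0 < x -> (0 < #|distinct_tuples n a|)%N ->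
  \sum_(H in Ofam a n m) x ^+ ncolseq H C s <=
  #|Ofam a n m|%:R * expR ((x - 1) * distinct_colour_fraction * m%:R).
Proof.
move=> x0 U0; set U := distinct_tuples n a; set G := colour_tuples.
pose g t := if t \in G then x else 1.
have g0 t : 0 <= g t by rewrite /g; case: ifP => _; rewrite ?ler01 ?ltW.
have prod_g (H : {set a.-tuple 'I_n}) : \prod_(t in H) g t = x ^+ ncolseq H C s.
  rewrite -big_mkcondr prodr_const; congr (_ ^+ _); apply: eq_card => t.
  by rewrite unfold_in /G /colour_tuples !inE.
have sum_g : \sum_(t in U) g t = #|U|%:R + (x - 1) * #|U :&: G|%:R.
  rewrite (big_setID G) /= [X in X + _ = _](eq_bigr (fun=> x)); last first.
    by move=> t /setIP[_ Gt]; rewrite /g Gt.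
  rewrite [X in _ + X = _](eq_bigr (fun=> 1)); last first.
    by move=> t /setDP[_ Gt]; rewrite /g (negbTE Gt).
  rewrite !sumr_const cardsD natrB ?subset_leq_card ?subsetIl // -[x *+ _]mulr_natl; ring.
have mean_g : (\sum_(t in U) g t) / #|U|%:R = 1 + (x - 1) * distinct_colour_fraction.
  by rewrite /distinct_colour_fraction sum_g setIC; field; rewrite pnatr_eq0 -lt0n.
rewrite Ofam_transversals (eq_bigr _ (fun H _ => esym (prod_g H))).
apply: le_trans (transversal_sum_le_mean m g0 _ (@class_sum_distinct_tuples n a R) _) _.
- by rewrite pnatr_eq0 -lt0n ffact_gt0.
- exact: vset_a_subsets.
rewrite ler_wpM2l ?ler0n // mean_g expRM_natr; apply: lerXn2r; last exact: expR_ge1Dx.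
  by rewrite nnegrE -mean_g divr_ge0 ?sumr_ge0.
by rewrite nnegrE expR_ge0.
Qed.

Lemma card_unbalanced_le (e eps : R) m : 0 < e <= 1 -> e <= eps -> (0 < a <= n)%N ->
  (a * a)%:R / n%:R <= e / 2 ->
  #|[set H in Ofam a n m | ~~ colseq_balanced eps m H]|%:R <=
  2 * #|Ofam a n m|%:R * expR (- (e ^+ 2 / 48) * m%:R).
Proof.
move=> e01 ee /andP[a0 an] aan.
have n0 : (0 < n)%N := leq_trans a0 an.
have U0 : (0 < #|distinct_tuples n a|)%N by rewrite card_distinct_tuples ffact_gt0.
apply: (chernoff (X := fun H => ncolseq H C s)) => //.
- by move=> x x0; apply: colseq_mgf.
- exact: colseq_density_ge0_le1.
rewrite /distinct_colour_fraction colseq_densityE.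
apply: le_trans (dist_frac_setI _ _ U0) _.
apply: le_trans aan; rewrite card_tuple card_ord ler_pdivrMr ?ltr0n ?expn_gt0 ?n0 //.
rewrite mulrAC ler_pdivlMr ?ltr0n //; exact: card_nonuniq_tuples.
Qed.

End Colourings.

Lemma card_bad_le_sum (R : realType) (a n b m : nat) (eps : R) :
  (#|@bad R a n b m eps| <= \sum_(C : {ffun 'I_n -> 'I_b}) \sum_(s : a.-tuple 'I_b)
     #|[set H in Ofam a n m | ~~ colseq_balanced C s eps m H]|)%N.
Proof.
have -> : @bad R a n b m eps =
    [set H in Ofam a n m | [exists C : {ffun 'I_n -> 'I_b},
      [exists s : a.-tuple 'I_b, ~~ colseq_balanced C s eps m H]]].
  by apply/setP => H; rewrite !inE /good negb_forall; under eq_existsb do rewrite negb_forall.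
apply: leq_trans (card_exists_le _ _) _; apply: leq_sum => C _; exact: card_exists_le.
Qed.

Lemma pow_mul_expR_le (R : realType) (b n : nat) (y : R) : 2 * b%:R * n%:R <= y ->
  b%:R ^+ n * expR (- y) <= 2^-n.
Proof.
move=> yn; apply: le_trans (_ : b%:R ^+ n * expR (- (2 * b%:R)) ^+ n <= _).
  by rewrite ler_wpM2l ?exprn_ge0 // -expRM_natr ler_expR mulNr lerN2.
rewrite -exprMn -exprVn; apply: lerXn2r; rewrite ?nnegrE ?mulr_ge0 ?expR_ge0 ?invr_ge0 //.
rewrite expRN ler_pdivrMr ?expR_gt0 // mulrC ler_pdivlMr //.
by apply: le_trans (expR_ge1Dx _); lra.
Qed.

Lemma card_bad_le (R : realType) (a n b m : nat) (eps e : R) :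
  0 < e <= 1 -> e <= eps -> (0 < a <= n)%N -> (a * a)%:R / n%:R <= e / 2 ->
  #|@bad R a n b m eps|%:R <=
  2 * b%:R ^+ a * (b%:R ^+ n * expR (- (e ^+ 2 / 48 * m%:R))) * #|Ofam a n m|%:R.
Proof.
move=> e01 ee an aan; have := @card_bad_le_sum R a n b m eps; rewrite -(ler_nat R) !natr_sum.
move/le_trans; apply.
apply: le_trans (_ : _ <= \sum_(C : {ffun 'I_n -> 'I_b}) \sum_(s : a.-tuple 'I_b)
  2 * #|Ofam a n m|%:R * expR (- (e ^+ 2 / 48) * m%:R)) _.
  apply: ler_sum => C _; rewrite natr_sum; apply: ler_sum => s _; exact: card_unbalanced_le.
rewrite !sumr_const card_ffun card_tuple !card_ord -mulrnA -[X in X <= _]mulr_natr natrM !natrX.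
by rewrite mulNr le_eqVlt; apply/orP; left; apply/eqP; ring.
Qed.

Lemma nat_gt_eventually (R : realType) (x : R) : exists N, forall n, (N <= n)%N -> x < n%:R.
Proof.
have [x0|x0] := lerP 0 x; last by exists 0%N => n _; apply: lt_le_trans x0 _.
exists (Num.Def.archi_bound x) => n Nn.
by apply: lt_le_trans (archi_boundP x0) _; rewrite ler_nat.
Qed.

Theorem lemma13 (R : realType) (a b : nat) (ha : (2 <= a)%N) (hb : (2 <= b)%N)
  (eps : R) (heps : 0 < eps) (m : nat -> nat)
  (hm : forall M : R, exists N : nat, forall n : nat, (N <= n)%N ->
          M * n%:R <= (m n)%:R) :
  forall delta : R, 0 < delta ->
  exists N : nat, forall n : nat, (N <= n)%N ->
    (#|@bad R a n b (m n) eps|)%:R <= delta * (#|Ofam a n (m n)|)%:R.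
Proof.
move=> delta delta0; pose e := Num.min eps 1; pose k := e ^+ 2 / 48.
have e01 : 0 < e <= 1 by rewrite lt_min heps ltr01 ge_min lexx orbT.
have ee : e <= eps by rewrite ge_min lexx.
have k0 : 0 < k by rewrite divr_gt0 ?exprn_gt0; case/andP: e01.
have [N0 hN0] := hm (2 * b%:R / k).
have [N1 hN1] := nat_gt_eventually (2 * (a * a)%:R / e).
have [N2 hN2] := nat_gt_eventually (2 * b%:R ^+ a / delta).
exists (maxn a (maxn N0 (maxn N1 N2))) => n.
rewrite !geq_max => /and4P[an /hN0 mn /hN1 n1 /hN2 n2].
have a0 : (0 < a)%N by apply: leq_trans ha.
have n0 : 0 < n%:R :> R by rewrite ltr0n (leq_trans a0).
apply: le_trans (@card_bad_le R a n b (m n) eps e e01 ee _ _) _.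
- by rewrite a0.
- case/andP: e01 => e0 _; rewrite ler_pdivrMr //.
  by move: n1; rewrite ltr_pdivrMr //; nra.
apply: ler_wpM2r; first exact: ler0n.
apply: le_trans (_ : 2 * b%:R ^+ a * 2^-n <= _).
  rewrite ler_wpM2l ?mulr_ge0 ?exprn_ge0 ?ler0n // pow_mul_expR_le //.
  have -> : 2 * b%:R * n%:R = k * (2 * b%:R / k * n%:R) by field; rewrite gt_eqF.
  by rewrite -/k ler_pM2l.
have n2n : n%:R <= 2 ^+ n :> R by rewrite -natrX ler_nat ltnW // ltn_expl.
rewrite ler_pdivrMr ?exprn_gt0 //; move: n2; rewrite ltr_pdivrMr //; nra.
Qed.
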